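(* Every connected finite-dimensional $\Delta$-complex $\mathcal C$ admits an immersion into a $\Delta$-complex that has exactly one $0$-cell.
   Context: A $\Delta$-complex is a CW-complex $\mathcal C$ in which each $k$-cell $c$ has a distinguished characteristic map $\sigma_c\colon\Delta^k\to\mathcal C$, where $\Delta^k=[v_0,\dots,v_k]$ is the standard $k$-simplex with ordered vertices $v_0<\dots<v_k$, such that the restriction of $\sigma_c$ to each $(k-1)$-dimensional face (identified with $\Delta^{k-1}$ via the order-preserving linear homeomorphism) is the distinguished characteristic map of some $(k-1)$-cell. A map $f\colon\mathcal D\to\mathcal C$ between $\Delta$-complexes commutes with the characteristic maps if for every $k$-cell $d$ of $\mathcal D$, $f(d)$ is a $k$-cell of $\mathcal C$ and $f\circ\sigma_d=\sigma_{f(d)}$. An immersion is a continuous map that commutes with the characteristic maps and is a local homeomorphism onto its image (every point has an open neighbourhood $U$ with $f|_U$ a homeomorphism onto $f(U)\subseteq f(\mathcal D)$). *)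

From Stdlib Require Import Reals List Arith.
Import ListNotations.
Open Scope R_scope.

(* A Delta-complex, given by its combinatorial data (a semi-simplicial set):
   [cell k] are the k-cells, [face k i c] is the i-th face (0 <= i <= k+1)
   of the (k+1)-cell c, i.e. the cell whose distinguished characteristic map
   is the restriction of sigma_c to the face [v_0,..,^v_i,..,v_(k+1)]. The space itself is the geometric
   realization [Pt] below, with the weak (CW) topology [is_open]. *)
Record DeltaComplex := {
  cell : nat -> Type;
  face : forall k : nat, nat -> cell (S k) -> cell k;
  face_rel : forall (k i j : nat) (c : cell (S (S k))),
      (i < j)%nat -> (j <= S (S k))%nat ->
      face k i (face (S k) j c) = face k (j - 1) (face (S k) i c)
}.

Definition lsum (l : list R) : R := fold_right Rplus 0 l.

Definition in_simplex (k : nat) (l : list R) : Prop :=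
  length l = S k /\ Forall (fun x => 0 <= x) l /\ lsum l = 1.

Definition in_open_simplex (k : nat) (l : list R) : Prop :=
  length l = S k /\ Forall (fun x => 0 < x) l /\ lsum l = 1.

Definition close (eps : R) (l l' : list R) : Prop :=
  length l' = length l /\
  forall i, (i < length l)%nat -> Rabs (nth i l 0 - nth i l' 0) < eps.

Fixpoint find_zero (l : list R) : option nat :=
  match l with
  | [] => None
  | x :: l' => if Req_EM_T x 0 then Some 0%nat
               else match find_zero l' with Some i => Some (S i) | None => None end
  end.

Fixpoint remove_nth (i : nat) (l : list R) : list R :=
  match i, l with
  | _, [] => []
  | O, _ :: l' => l'
  | S i', x :: l' => x :: remove_nth i' l'
  end.

Definition RawPt (X : DeltaComplex) : Type := { k : nat & (cell X k * list R)%type }.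

(* genuine points: a cell and a point of the interior of its simplex;
   every point of |X| is uniquely of this form *)
Definition IsPt (X : DeltaComplex) (p : RawPt X) : Prop :=
  in_open_simplex (projT1 p) (snd (projT2 p)).

(* the distinguished characteristic map sigma_c : Delta^k -> |X|,
   applied to a point l of the closed simplex: pass to the face
   spanned by the support of l *)
Fixpoint charmap (X : DeltaComplex) (k : nat) : cell X k -> list R -> RawPt X :=
  match k with
  | O => fun c l => existT _ O (c, l)
  | S k' => fun c l =>
      match find_zero l with
      | Some i => charmap X k' (face X k' i c) (remove_nth i l)
      | None => existT _ (S k') (c, l)
      end
  end.

(* weak topology: U is open iff sigma_c^{-1}(U) is open in Delta^k for all c *)
Definition is_open (X : DeltaComplex) (U : RawPt X -> Prop) : Prop :=
  forall (k : nat) (c : cell X k) (l : list R),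
    in_simplex k l -> U (charmap X k c l) ->
    exists eps, 0 < eps /\
      forall l', in_simplex k l' -> close eps l l' -> U (charmap X k c l').

Definition connected (X : DeltaComplex) : Prop :=
  forall U : RawPt X -> Prop,
    is_open X U -> is_open X (fun p => ~ U p) ->
    (forall p, IsPt X p -> U p) \/ (forall p, IsPt X p -> ~ U p).

Definition finite_dimensional (X : DeltaComplex) : Prop :=
  exists n : nat, forall k : nat, (n < k)%nat -> cell X k -> False.

Definition one_zero_cell (X : DeltaComplex) : Prop :=
  exists v : cell X 0, forall w : cell X 0, w = v.

Record DMap (D C : DeltaComplex) := {
  cmap : forall k : nat, cell D k -> cell C k;
  cmap_face : forall (k i : nat) (c : cell D (S k)), (i <= S k)%nat ->
      cmap k (face D k i c) = face C k i (cmap (S k) c)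
}.

Definition realize {D C : DeltaComplex} (f : DMap D C) (p : RawPt D) : RawPt C :=
  existT _ (projT1 p) (cmap D C f (projT1 p) (fst (projT2 p)), snd (projT2 p)).

Definition continuous {D C : DeltaComplex} (f : DMap D C) : Prop :=
  forall V, is_open C V -> is_open D (fun p => V (realize f p)).

Definition local_homeo_onto_image {D C : DeltaComplex} (f : DMap D C) : Prop :=
  forall p, IsPt D p ->
    exists U : RawPt D -> Prop,
      is_open D U /\ U p /\
      (forall q q', IsPt D q -> IsPt D q' -> U q -> U q' ->
         realize f q = realize f q' -> q = q') /\
      (forall V, is_open D V ->
         exists W, is_open C W /\
           forall y, IsPt C y ->
             ((exists q, IsPt D q /\ V q /\ U q /\ realize f q = y) <->
              (W y /\ exists q, IsPt D q /\ U q /\ realize f q = y))).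

Definition immersion {D C : DeltaComplex} (f : DMap D C) : Prop :=
  continuous f /\ local_homeo_onto_image f.

From Stdlib Require Import Reals List Arith Lia Lra ClassicalEpsilon Eqdep_dec.
Import ListNotations.
Open Scope R_scope.

(* Identify all 0-cells of C to a single vertex, keeping the cells of positive dimension
   and their faces; the quotient map is an immersion.  Near a point of a cell of positive
   dimension it is injective, and its image is open.  Near a vertex v, take the set where
   the barycentric weight of v exceeds 1/2: it contains no other vertex, so the map is
   injective there, and adding the open set where that weight is below 1/2 turns the trace
   of any open set into a saturated open set. *)

Lemma find_zero_some l i : find_zero l = Some i -> (i < length l)%nat /\ nth i l 0 = 0.
Proof.
  revert i; induction l as [|x l IH]; simpl; intros i H; [discriminate|].
  destruct (Req_EM_T x 0) as [Hx|Hx].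
  - injection H as <-. split; [lia|exact Hx].
  - destruct (find_zero l) as [j|]; [|discriminate]. injection H as <-.
    destruct (IH j eq_refl). split; [lia|assumption].
Qed.

Lemma find_zero_none l : find_zero l = None -> Forall (fun x => x <> 0) l.
Proof.
  induction l as [|x l IH]; simpl; intros H; constructor;
    destruct (Req_EM_T x 0); try discriminate; [assumption|].
  destruct (find_zero l); [discriminate|auto].
Qed.

Lemma remove_nth_length l i : (i < length l)%nat -> length (remove_nth i l) = pred (length l).
Proof.
  revert i; induction l as [|x l IH]; intros [|i] H; simpl in *; try lia; try reflexivity.
  rewrite IH by lia. destruct l; simpl in *; lia.
Qed.

Lemma remove_nth_lsum l i : nth i l 0 = 0 -> lsum (remove_nth i l) = lsum l.
Proof.
  unfold lsum; revert i; induction l as [|x l IH]; intros [|i] H; simpl in *; try reflexivity.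
  - subst. lra.
  - rewrite IH; auto.
Qed.

Lemma remove_nth_Forall (P : R -> Prop) l i : Forall P l -> Forall P (remove_nth i l).
Proof.
  revert i; induction l as [|x l IH]; intros [|i] H; simpl; inversion H; auto.
Qed.

Lemma singleton_of_lsum1 l : length l = 1%nat -> lsum l = 1 -> l = [1].
Proof.
  destruct l as [|x [|y l]]; simpl; intros Hl Hs; try discriminate.
  unfold lsum in Hs; simpl in Hs. f_equal. lra.
Qed.

Lemma close_mono e e' l l' : close e l l' -> e <= e' -> close e' l l'.
Proof. intros [Hlen Hc] He. split; auto. intros i Hi. specialize (Hc i Hi). lra. Qed.

Lemma close_consE e x l l' : close e (x :: l) l' ->
  exists x' l0, l' = x' :: l0 /\ Rabs (x - x') < e /\ close e l l0.
Proof.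
  intros [Hlen Hc]. destruct l' as [|x' l0]; simpl in Hlen; [discriminate|].
  exists x', l0. split; [reflexivity|split].
  - apply (Hc 0%nat). simpl; lia.
  - split; [lia|]. intros i Hi. apply (Hc (S i)). simpl; lia.
Qed.

Fixpoint support_size (l : list R) : nat :=
  match l with
  | [] => 0
  | x :: l' => ((if Req_EM_T x 0 then 0 else 1) + support_size l')%nat
  end.

Lemma support_size_remove_nth l i : nth i l 0 = 0 -> support_size (remove_nth i l) = support_size l.
Proof.
  revert i; induction l as [|x l IH]; intros [|i] H; simpl in *; try reflexivity.
  - destruct (Req_EM_T x 0); [reflexivity|contradiction].
  - rewrite IH; auto.
Qed.

Lemma support_size_full l : Forall (fun x => x <> 0) l -> support_size l = length l.
Proof.
  induction 1 as [|x l Hx _ IH]; simpl; [reflexivity|].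
  destruct (Req_EM_T x 0); [contradiction|]. rewrite IH; reflexivity.
Qed.

Lemma support_size_near l : exists e, 0 < e /\
  forall l', close e l l' -> (support_size l <= support_size l')%nat.
Proof.
  induction l as [|x l [e0 [He0 IH]]].
  - exists 1. split; [lra|]. intros; simpl; lia.
  - destruct (Req_EM_T x 0) as [Hx|Hx].
    + exists e0. split; [exact He0|]. intros l' Hc.
      destruct (close_consE _ _ _ _ Hc) as [x' [l0 [-> [_ Hc0]]]].
      specialize (IH l0 Hc0). simpl. destruct (Req_EM_T x 0); [|contradiction].
      destruct (Req_EM_T x' 0); lia.
    + exists (Rmin e0 (Rabs x)). split; [apply Rmin_pos; [exact He0|apply Rabs_pos_lt, Hx]|].
      intros l' Hc.
      destruct (close_consE _ _ _ _ Hc) as [x' [l0 [-> [Hx' Hc0]]]].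
      specialize (IH l0 (close_mono _ _ _ _ Hc0 (Rmin_l _ _))). simpl.
      destruct (Req_EM_T x 0); [contradiction|].
      destruct (Req_EM_T x' 0) as [E|]; [|lia].
      subst x'. rewrite Rminus_0_r in Hx'. pose proof (Rmin_r e0 (Rabs x)). lra.
Qed.

Lemma charmap_dim X k (c : cell X k) l : length l = S k ->
  projT1 (charmap X k c l) = pred (support_size l).
Proof.
  revert c l; induction k as [|k IH]; intros c l Hl; simpl.
  - destruct l as [|x [|y l]]; simpl in Hl; try discriminate. simpl.
    destruct (Req_EM_T x 0); reflexivity.
  - destruct (find_zero l) as [i|] eqn:E.
    + destruct (find_zero_some _ _ E) as [Hi Hz].
      rewrite IH, support_size_remove_nth by (try rewrite remove_nth_length; auto; lia).
      reflexivity.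
    + simpl. rewrite support_size_full by (apply find_zero_none; exact E). lia.
Qed.

Lemma charmap_IsPt X k (c : cell X k) l : in_simplex k l -> IsPt X (charmap X k c l).
Proof.
  revert c l; induction k as [|k IH]; intros c l [Hl [Hp Hs]]; simpl.
  - rewrite (singleton_of_lsum1 l Hl Hs).
    split; [reflexivity|split; [constructor; [lra|constructor]|unfold lsum; simpl; lra]].
  - destruct (find_zero l) as [i|] eqn:E.
    + destruct (find_zero_some _ _ E) as [Hi Hz]. apply IH.
      split; [rewrite remove_nth_length; lia|].
      split; [apply remove_nth_Forall; exact Hp|rewrite remove_nth_lsum; assumption].
    + split; [exact Hl|split; [|exact Hs]].
      apply find_zero_none in E. rewrite Forall_forall in *.
      intros x Hx. destruct (Hp x Hx) as [H|H]; [exact H|]. subst. exfalso; exact (E 0 Hx eq_refl).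
Qed.

Lemma is_open_ext X (U U' : RawPt X -> Prop) :
  (forall q, IsPt X q -> U q <-> U' q) -> is_open X U -> is_open X U'.
Proof.
  intros HUU' HU k c l Hl HUl.
  apply HUU' in HUl; [|apply charmap_IsPt; exact Hl].
  destruct (HU k c l Hl HUl) as [e [He H]].
  exists e. split; [exact He|]. intros l' Hl' Hc.
  apply HUU'; [apply charmap_IsPt; exact Hl'|]. apply H; assumption.
Qed.

Lemma is_open_and X (U U' : RawPt X -> Prop) :
  is_open X U -> is_open X U' -> is_open X (fun q => U q /\ U' q).
Proof.
  intros HU HU' k c l Hl [HUl HUl'].
  destruct (HU k c l Hl HUl) as [e [He H]], (HU' k c l Hl HUl') as [e' [He' H']].
  exists (Rmin e e'). split; [apply Rmin_pos; assumption|]. intros l' Hl' Hc. split.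
  - apply H; [exact Hl'|]. eapply close_mono; [exact Hc|apply Rmin_l].
  - apply H'; [exact Hl'|]. eapply close_mono; [exact Hc|apply Rmin_r].
Qed.

Lemma is_open_or X (U U' : RawPt X -> Prop) :
  is_open X U -> is_open X U' -> is_open X (fun q => U q \/ U' q).
Proof.
  intros HU HU' k c l Hl [HUl|HUl'].
  - destruct (HU k c l Hl HUl) as [e [He H]].
    exists e. split; [exact He|]. intros; left; auto.
  - destruct (HU' k c l Hl HUl') as [e [He H]].
    exists e. split; [exact He|]. intros; right; auto.
Qed.

Lemma is_open_const X (P : Prop) : is_open X (fun _ => P).
Proof. intros k c l _ HP. exists 1. split; [lra|]. intros; exact HP. Qed.

Lemma dim_pos_open X : is_open X (fun q => (1 <= projT1 q)%nat).
Proof.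
  intros k c l [Hl _] Hdim. destruct (support_size_near l) as [e [He H]].
  exists e. split; [exact He|]. intros l' [Hl' _] Hc.
  specialize (H l' Hc). rewrite charmap_dim in * by assumption. lia.
Qed.

Fixpoint vertex (X : DeltaComplex) (k : nat) : cell X k -> nat -> cell X 0 :=
  match k with
  | O => fun c _ => c
  | S k' => fun c j =>
      match j with
      | O => vertex X k' (face X k' 1 c) O
      | S j' => vertex X k' (face X k' 0 c) j'
      end
  end.

(* [bump i j] is the index in a simplex of the [j]-th vertex of its [i]-th face. *)
Definition bump (i j : nat) : nat := if Nat.ltb j i then j else S j.

Lemma bump_SS i j : bump (S i) (S j) = S (bump i j).
Proof. unfold bump. change (S j <? S i) with (j <? i). destruct (j <? i); reflexivity. Qed.

Lemma bump_S0 i : bump (S i) 0 = 0%nat.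
Proof. reflexivity. Qed.

Lemma vertex_face X k (c : cell X (S k)) i j : (i <= S k)%nat -> (j <= k)%nat ->
  vertex X k (face X k i c) j = vertex X (S k) c (bump i j).
Proof.
  revert c i j; induction k as [|k IH]; intros c i j Hi Hj.
  - assert (j = 0%nat) by lia. subst.
    destruct i as [|[|i]]; [reflexivity|reflexivity|lia].
  - destruct j as [|j], i as [|i]; try reflexivity.
    + destruct i as [|i]; [reflexivity|]. rewrite bump_S0. simpl.
      rewrite (face_rel X k 1 (S (S i)) c), (IH _ (S i) 0%nat) by lia. reflexivity.
    + rewrite bump_SS. simpl.
      rewrite (face_rel X k 0 (S i) c) by lia.
      replace (S i - 1)%nat with i by lia. rewrite IH by lia. reflexivity.
Qed.

Fixpoint wsum (g : nat -> R) (l : list R) : R :=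
  match l with
  | [] => 0
  | x :: l' => g O * x + wsum (fun j => g (S j)) l'
  end.

Lemma wsum_ext l g g' : (forall j, (j < length l)%nat -> g j = g' j) -> wsum g l = wsum g' l.
Proof.
  revert g g'; induction l as [|x l IH]; intros g g' H; simpl; [reflexivity|].
  rewrite (H 0%nat) by (simpl; lia). f_equal. apply IH. intros j Hj. apply H. simpl; lia.
Qed.

Lemma wsum_remove_nth l i g : nth i l 0 = 0 ->
  wsum (fun j => g (bump i j)) (remove_nth i l) = wsum g l.
Proof.
  revert i g; induction l as [|x l IH]; intros [|i] g H; simpl in *; try reflexivity.
  - subst. rewrite Rmult_0_r, Rplus_0_l. reflexivity.
  - rewrite bump_S0. f_equal.
    rewrite <- (IH i (fun j => g (S j)) H). apply wsum_ext. intros. rewrite bump_SS. reflexivity.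
Qed.

Lemma wsum_continuous l g : (forall j, Rabs (g j) <= 1) -> forall d, 0 < d ->
  exists e, 0 < e /\ forall l', close e l l' -> Rabs (wsum g l - wsum g l') < d.
Proof.
  revert g; induction l as [|x l IH]; intros g Hg d Hd.
  - exists 1. split; [lra|]. intros l' [Hlen _]. destruct l'; [|discriminate].
    simpl. rewrite Rminus_0_r, Rabs_R0. exact Hd.
  - destruct (IH (fun j => g (S j)) (fun j => Hg (S j)) (d/2)) as [e1 [He1 H1]]; [lra|].
    exists (Rmin e1 (d/2)). split; [apply Rmin_pos; lra|]. intros l' Hc.
    destruct (close_consE _ _ _ _ Hc) as [x' [l0 [-> [Hx Hc0]]]].
    specialize (H1 l0 (close_mono _ _ _ _ Hc0 (Rmin_l _ _))). simpl.
    replace (g 0%nat * x + wsum (fun j => g (S j)) l - (g 0%nat * x' + wsum (fun j => g (S j)) l0))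
      with (g 0%nat * (x - x') + (wsum (fun j => g (S j)) l - wsum (fun j => g (S j)) l0))
      by ring.
    eapply Rle_lt_trans; [apply Rabs_triang|]. rewrite Rabs_mult.
    assert (Rabs (g 0%nat) * Rabs (x - x') <= Rabs (x - x')).
    { rewrite <- (Rmult_1_l (Rabs (x - x'))) at 2.
      apply Rmult_le_compat_r; [apply Rabs_pos|apply Hg]. }
    pose proof (Rmin_r e1 (d/2)). lra.
Qed.

Definition indicator {A : Type} (v u : A) : R :=
  if excluded_middle_informative (u = v) then 1 else 0.

Lemma indicator_bound A (v u : A) : Rabs (indicator v u) <= 1.
Proof.
  unfold indicator. destruct excluded_middle_informative;
    [rewrite Rabs_R1|rewrite Rabs_R0]; lra.
Qed.

(* The total barycentric coordinate of the vertex [v] at a point. *)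
Definition weight (X : DeltaComplex) (v : cell X 0) (q : RawPt X) : R :=
  wsum (fun j => indicator v (vertex X (projT1 q) (fst (projT2 q)) j)) (snd (projT2 q)).

Lemma weight_charmap X v k (c : cell X k) l : length l = S k ->
  weight X v (charmap X k c l) = wsum (fun j => indicator v (vertex X k c j)) l.
Proof.
  revert c l; induction k as [|k IH]; intros c l Hl; [reflexivity|].
  simpl. destruct (find_zero l) as [i|] eqn:E; [|reflexivity].
  destruct (find_zero_some _ _ E) as [Hi Hz].
  rewrite IH by (rewrite remove_nth_length; lia).
  rewrite <- (wsum_remove_nth l i _ Hz). apply wsum_ext.
  intros j Hj. rewrite remove_nth_length in Hj by lia. rewrite vertex_face by lia. reflexivity.
Qed.

Lemma weight_near X v k (c : cell X k) l d : in_simplex k l -> 0 < d ->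
  exists e, 0 < e /\ forall l', in_simplex k l' -> close e l l' ->
    Rabs (weight X v (charmap X k c l) - weight X v (charmap X k c l')) < d.
Proof.
  intros [Hl _] Hd.
  destruct (wsum_continuous l _ (fun j => indicator_bound _ v (vertex X k c j)) d Hd)
    as [e [He H]].
  exists e. split; [exact He|]. intros l' [Hl' _] Hc.
  rewrite !weight_charmap by assumption. apply H, Hc.
Qed.

Lemma weight_gt_open X v a : is_open X (fun q => a < weight X v q).
Proof.
  intros k c l Hl Ha. destruct (weight_near X v k c l _ Hl (proj2 (Rlt_0_minus _ _) Ha)) as [e [He H]].
  exists e. split; [exact He|]. intros l' Hl' Hc.
  specialize (H l' Hl' Hc). apply Rabs_def2 in H. lra.
Qed.

Lemma weight_lt_open X v a : is_open X (fun q => weight X v q < a).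
Proof.
  intros k c l Hl Ha. destruct (weight_near X v k c l _ Hl (proj2 (Rlt_0_minus _ _) Ha)) as [e [He H]].
  exists e. split; [exact He|]. intros l' Hl' Hc.
  specialize (H l' Hl' Hc). apply Rabs_def2 in H. lra.
Qed.

Definition collapsed_cell (C : DeltaComplex) (k : nat) : Type :=
  match k with O => unit | S k' => cell C (S k') end.

Definition collapsed_face (C : DeltaComplex) (k i : nat) :
    collapsed_cell C (S k) -> collapsed_cell C k :=
  match k with
  | O => fun _ => tt
  | S k' => face C (S k') i
  end.

Lemma collapsed_face_rel C (k i j : nat) (c : collapsed_cell C (S (S k))) :
  (i < j)%nat -> (j <= S (S k))%nat ->
  collapsed_face C k i (collapsed_face C (S k) j c)
  = collapsed_face C k (j - 1) (collapsed_face C (S k) i c).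
Proof. destruct k as [|k]; [reflexivity|]. apply face_rel. Qed.

Definition collapse_vertices (C : DeltaComplex) : DeltaComplex :=
  {| cell := collapsed_cell C; face := collapsed_face C; face_rel := collapsed_face_rel C |}.

Definition collapse_cell (C : DeltaComplex) (k : nat) : cell C k -> cell (collapse_vertices C) k :=
  match k with O => fun _ => tt | S k' => fun c => c end.

Lemma collapse_cell_face C k i (c : cell C (S k)) :
  collapse_cell C k (face C k i c) = face (collapse_vertices C) k i (collapse_cell C (S k) c).
Proof. destruct k; reflexivity. Qed.

Definition collapse (C : DeltaComplex) : DMap C (collapse_vertices C) :=
  {| cmap := collapse_cell C; cmap_face := fun k i c _ => collapse_cell_face C k i c |}.

Lemma realize_collapse_charmap C k (c : cell C k) l :
  realize (collapse C) (charmap C k c l)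
  = charmap (collapse_vertices C) k (collapse_cell C k c) l.
Proof.
  revert c l; induction k as [|k IH]; intros c l; [reflexivity|].
  simpl. destruct (find_zero l); [|reflexivity].
  rewrite IH, collapse_cell_face. reflexivity.
Qed.

Lemma collapse_continuous C : continuous (collapse C).
Proof.
  intros V HV k c l Hl HVl. cbv beta in *. rewrite realize_collapse_charmap in HVl.
  destruct (HV k (collapse_cell C k c) l Hl HVl) as [e [He H]].
  exists e. split; [exact He|]. intros l' Hl' Hc.
  rewrite realize_collapse_charmap. apply H; assumption.
Qed.

(* The collapse is a quotient map; over the new vertex this is because [Delta^0] is a point. *)
Lemma collapse_open C (W : RawPt (collapse_vertices C) -> Prop) :
  is_open C (fun q => W (realize (collapse C) q)) -> is_open (collapse_vertices C) W.
Proof.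
  intros HW [|k] e l Hl HWl.
  - exists 1. split; [lra|]. intros l' Hl' _.
    destruct Hl as [Hl [_ Hs]], Hl' as [Hl' [_ Hs']].
    rewrite (singleton_of_lsum1 l' Hl' Hs'), <- (singleton_of_lsum1 l Hl Hs). exact HWl.
  - change e with (collapse_cell C (S k) e) in HWl |- *.
    rewrite <- realize_collapse_charmap in HWl.
    destruct (HW (S k) e l Hl HWl) as [eps [Heps H]].
    exists eps. split; [exact Heps|]. intros l' Hl' Hc.
    rewrite <- realize_collapse_charmap. apply H; assumption.
Qed.

Lemma realize_collapse_eq C (q q' : RawPt C) :
  realize (collapse C) q = realize (collapse C) q' ->
  q = q' \/ (projT1 q = 0%nat /\ projT1 q' = 0%nat).
Proof.
  destruct q as [m [c l]], q' as [m' [c' l']]. unfold realize. simpl. intros H.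
  assert (m = m') as <- by exact (f_equal (@projT1 _ _) H).
  apply inj_pair2_eq_dec in H; [|exact Nat.eq_dec].
  destruct m as [|m]; [right; auto|left]. injection H as -> ->. reflexivity.
Qed.

Definition saturated C (P : RawPt C -> Prop) : Prop :=
  forall q q', IsPt C q -> IsPt C q' ->
    realize (collapse C) q = realize (collapse C) q' -> P q -> P q'.

Definition collapse_image C (P : RawPt C -> Prop) (y : RawPt (collapse_vertices C)) : Prop :=
  exists q, IsPt C q /\ realize (collapse C) q = y /\ P q.

Lemma collapse_image_open C (P : RawPt C -> Prop) :
  is_open C P -> saturated C P -> is_open (collapse_vertices C) (collapse_image C P).
Proof.
  intros HP Hsat. apply collapse_open, (is_open_ext C P); [|exact HP].
  intros q Hq. split.
  - intros HPq. exists q. auto.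
  - intros [q' [Hq' [E HPq']]]. exact (Hsat q' q Hq' Hq E HPq').
Qed.

(* On such a set the collapse is a homeomorphism onto its image. *)
Definition chart_domain C (U : RawPt C -> Prop) : Prop :=
  is_open C U /\
  (forall q q', IsPt C q -> IsPt C q' -> U q -> U q' ->
     realize (collapse C) q = realize (collapse C) q' -> q = q') /\
  (forall V, is_open C V -> exists P, is_open C P /\ saturated C P /\
     forall q, IsPt C q -> U q -> (P q <-> V q)).

Lemma collapse_local_homeo C :
  (forall p, IsPt C p -> exists U, U p /\ chart_domain C U) ->
  local_homeo_onto_image (collapse C).
Proof.
  intros Hcharts p Hp.
  destruct (Hcharts p Hp) as [U [HUp [HU [Hinj Htrace]]]].
  exists U. split; [exact HU|split; [exact HUp|split; [exact Hinj|]]].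
  intros V HV. destruct (Htrace V HV) as [P [HP [Hsat HPV]]].
  exists (collapse_image C P). split; [apply collapse_image_open; assumption|].
  intros y _. split.
  - intros [q [Hq [HVq [HUq <-]]]].
    split; exists q; [split; [|split]; auto; apply HPV; auto|auto].
  - intros [[q' [Hq' [E HPq']]] [q [Hq [HUq <-]]]].
    exists q. split; [exact Hq|split; [|auto]].
    apply HPV; auto. exact (Hsat q' q Hq' Hq E HPq').
Qed.

Lemma positive_dim_chart C : chart_domain C (fun q => (1 <= projT1 q)%nat).
Proof.
  split; [apply dim_pos_open|split].
  - intros q q' _ _ Hq _ E.
    destruct (realize_collapse_eq C q q' E) as [->|[H0 _]]; [reflexivity|lia].
  - intros V HV. exists (fun q => (1 <= projT1 q)%nat /\ V q).
    split; [apply is_open_and; [apply dim_pos_open|exact HV]|split].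
    + intros q q' _ _ E [Hq HVq].
      destruct (realize_collapse_eq C q q' E) as [<-|[H0 _]]; [auto|lia].
    + intros q _ Hq. tauto.
Qed.

Definition vertex_point (C : DeltaComplex) (v : cell C 0) : RawPt C := existT _ 0%nat (v, [1]).

Lemma weight_vertex_point C v : weight C v (vertex_point C v) = 1.
Proof. unfold weight, indicator; simpl. destruct excluded_middle_informative; [ring|congruence]. Qed.

Lemma vertex_IsPt_cases C v q : IsPt C q -> projT1 q = 0%nat ->
  q = vertex_point C v \/ weight C v q = 0.
Proof.
  destruct q as [k [u l]]; simpl. intros [Hl [_ Hs]] ->. simpl in Hl.
  rewrite (singleton_of_lsum1 l Hl Hs). unfold weight, indicator; simpl.
  destruct excluded_middle_informative as [->|]; [left; reflexivity|right; ring].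
Qed.

Lemma vertex_star_chart C v : chart_domain C (fun q => 1/2 < weight C v q).
Proof.
  assert (Hvertex : forall q, IsPt C q -> projT1 q = 0%nat -> 1/2 < weight C v q ->
            q = vertex_point C v).
  { intros q Hq H0 Hw. destruct (vertex_IsPt_cases C v q Hq H0) as [|E]; [assumption|lra]. }
  split; [apply weight_gt_open|split].
  - intros q q' Hq Hq' Hw Hw' E.
    destruct (realize_collapse_eq C q q' E) as [|[H0 H0']]; [assumption|].
    rewrite (Hvertex q), (Hvertex q'); auto.
  - intros V HV.
    exists (fun q => (1/2 < weight C v q /\ V q) \/
               (weight C v q < 1/2 /\ ((1 <= projT1 q)%nat \/ V (vertex_point C v)))).
    split; [|split].
    + apply is_open_or; apply is_open_and; auto using weight_gt_open, weight_lt_open.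
      apply is_open_or; [apply dim_pos_open|apply is_open_const].
    + intros q q' Hq Hq' E HPq.
      destruct (realize_collapse_eq C q q' E) as [<-|[H0 H0']]; [exact HPq|].
      assert (HVv : V (vertex_point C v)).
      { destruct HPq as [[Hw HVq]|[_ [Hd|HVv]]]; [rewrite <- (Hvertex q); auto|lia|exact HVv]. }
      destruct (vertex_IsPt_cases C v q' Hq' H0') as [->|Hw0].
      * left. rewrite weight_vertex_point. split; [lra|exact HVv].
      * right. rewrite Hw0. split; [lra|right; exact HVv].
    + intros q _ Hw. split; [intros [[_ H]|[H _]]; [exact H|lra]|intros H; left; auto].
Qed.

Lemma collapse_immersion C : immersion (collapse C).
Proof.
  split; [apply collapse_continuous|apply collapse_local_homeo].
  intros [[|k] [u l]] Hp.
  - exists (fun q => 1/2 < weight C u q). split; [|apply vertex_star_chart].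
    destruct Hp as [Hl [_ Hs]]. simpl in Hl, Hs.
    replace l with [1] by (symmetry; apply singleton_of_lsum1; assumption).
    change (1/2 < weight C u (vertex_point C u)). rewrite weight_vertex_point. lra.
  - exists (fun q => (1 <= projT1 q)%nat). split; [simpl; lia|apply positive_dim_chart].
Qed.

Theorem mainTheorem3 (C : DeltaComplex) :
  finite_dimensional C -> connected C ->
  exists (E : DeltaComplex) (f : DMap C E), immersion f /\ one_zero_cell E.
Proof.
  intros _ _. exists (collapse_vertices C), (collapse C). split.
  - apply collapse_immersion.
  - exists tt. intros []. reflexivity.
Qed.
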